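(* Let $\mathcal B$ be finite, $r,\tilde r:\mathcal B\to\mathbb R$, $\nu\in\Delta(\mathcal B)$ with $\nu(b)>0$ for all $b$, and $\varepsilon\ge0$. Suppose $\inf_{\xi\in\mathbb R}\langle\nu,|r-\tilde r-\xi\mathbf 1|\rangle_{\mathcal B}\le\varepsilon$ and $\langle x,r-\tilde r\rangle_{\mathcal B}=0$ for some $x:\mathcal B\to\mathbb R$ with $\langle\mathbf 1,x\rangle_{\mathcal B}\ne0$. Then $$\langle\nu,|r-\tilde r|\rangle_{\mathcal B}\le\Bigl(1+\Bigl\|\frac x\nu\Bigr\|_\infty\cdot\frac1{|\langle x,\mathbf 1\rangle_{\mathcal B}|}\Bigr)\varepsilon.$$
   Context: $\langle f,g\rangle_{\mathcal B}=\sum_bf(b)g(b)$; $x/\nu$ is the entrywise ratio; $\mathbf 1$ is the all-ones function. *)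

From HB Require Import structures.
From mathcomp Require Import all_boot all_order all_algebra.
From mathcomp Require Import all_classical all_reals.
Set Implicit Arguments. Unset Strict Implicit. Unset Printing Implicit Defensive.
Import Order.TTheory GRing.Theory Num.Theory.
Local Open Scope ring_scope.

Definition ip (R : realType) (B : finType) (f g : B -> R) : R :=
  \sum_(b : B) f b * g b.

Definition supnorm (R : realType) (B : finType) (f : B -> R) : R :=
  \big[Num.max/0]_(b : B) `|f b|.

Definition is_distr (R : realType) (B : finType) (nu : B -> R) : Prop :=
  (forall b, 0 <= nu b) /\ \sum_(b : B) nu b = 1.

From HB Require Import structures.
From mathcomp Require Import all_boot all_order all_algebra.
From mathcomp Require Import all_classical all_reals.
From mathcomp Require Import ring.
Import Order.TTheory GRing.Theory Num.Theory.
Local Open Scope ring_scope.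
Local Open Scope classical_set_scope.

(* For every shift xi, orthogonality gives xi <x, 1> = -<x, d - xi>, which a
   Hoelder-type bound controls by ||x/nu||_oo <nu, |d - xi|>; the triangle
   inequality gives <nu, |d|> <= <nu, |d - xi|> + |xi|.  Hence
   <nu, |d|> <= (1 + ||x/nu||_oo / |<x, 1>|) <nu, |d - xi|> for every xi, and
   taking the infimum over xi yields the claim. *)

Section InnerProduct.
Context {R : realType} {B : finType}.
Implicit Types (f g nu x d : B -> R) (xi : R).

Lemma ipC f g : ip f g = ip g f.
Proof. by apply: eq_bigr => b _; rewrite mulrC. Qed.

Lemma ip_subr_cst x d xi :
  ip x (fun b => d b - xi) = ip x d - xi * ip x (fun _ => 1).
Proof. by rewrite /ip mulr_sumr -sumrB; apply: eq_bigr => b _; ring. Qed.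

Lemma supnorm_ge0 f : 0 <= supnorm f.
Proof. by apply: (big_ind (fun y => 0 <= y)) => // y z; rewrite le_max => ->. Qed.

Lemma normr_le_supnorm f b : `|f b| <= supnorm f.
Proof. by rewrite /supnorm (bigD1 b) //= le_max lexx. Qed.

Lemma normr_ip_le_supnorm x nu g : (forall b, 0 < nu b) ->
  `|ip x g| <= supnorm (fun b => x b / nu b) * ip nu (fun b => `|g b|).
Proof.
move=> nu_gt0; rewrite /ip mulr_sumr.
apply: le_trans (ler_norm_sum _ _ _) _; apply: ler_sum => b _.
have -> : x b = x b / nu b * nu b by rewrite divfK // gt_eqF.
rewrite normrM [`|_ * nu b|]normrM (gtr0_norm (nu_gt0 b)) mulrA.
rewrite ler_wpM2r // ler_wpM2r ?(ltW (nu_gt0 b)) //.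
exact: (normr_le_supnorm (fun b => x b / nu b)).
Qed.

Lemma ip_norm_le_shift nu d xi : is_distr nu ->
  ip nu (fun b => `|d b|) <= ip nu (fun b => `|d b - xi|) + `|xi|.
Proof.
move=> [nu_ge0 nu_sum1].
rewrite /ip -[X in _ + X]mul1r -nu_sum1 mulr_suml -big_split /=.
apply: ler_sum => b _; rewrite -mulrDr ler_wpM2l //.
by rewrite -[X in `|X|](subrK xi) ler_normD.
Qed.

Lemma normr_shift_ip1_le_supnorm x nu d xi : (forall b, 0 < nu b) -> ip x d = 0 ->
  `|xi| * `|ip x (fun _ => 1)|
    <= supnorm (fun b => x b / nu b) * ip nu (fun b => `|d b - xi|).
Proof.
move=> nu_gt0 xd0; rewrite -normrM -normrN -[- _]add0r -xd0 -ip_subr_cst.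
exact: normr_ip_le_supnorm.
Qed.

Lemma ip_norm_le_orthogonal_shift x nu d xi :
  is_distr nu -> (forall b, 0 < nu b) -> ip x d = 0 -> ip x (fun _ => 1) != 0 ->
  ip nu (fun b => `|d b|) <=
    (1 + supnorm (fun b => x b / nu b) * (1 / `|ip x (fun _ => 1)|))
    * ip nu (fun b => `|d b - xi|).
Proof.
move=> nu_distr nu_gt0 xd0 x1_neq0.
have x1_gt0 : 0 < `|ip x (fun _ => 1)| by rewrite normr_gt0.
have xi_le : `|xi| <= supnorm (fun b => x b / nu b) * (1 / `|ip x (fun _ => 1)|)
                      * ip nu (fun b => `|d b - xi|).
  by rewrite mul1r mulrAC ler_pdivlMr // normr_shift_ip1_le_supnorm.
rewrite mulrDl mul1r; apply: le_trans (ip_norm_le_shift nu d xi nu_distr) _.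
by rewrite lerD2l.
Qed.

Lemma ler_mul_inf (a c : R) (g : R -> R) : 0 < c ->
  (forall xi, a <= c * g xi) -> a <= c * inf [set g xi | xi in [set: R]].
Proof.
move=> c_gt0 a_le; rewrite mulrC -ler_pdivrMr //; apply: lb_le_inf.
  by exists (g 0), 0.
by move=> _ [xi _ <-]; rewrite ler_pdivrMr // mulrC a_le.
Qed.

End InnerProduct.

Theorem mainTheorem14 (R : realType) (B : finType) (r rt nu x : B -> R) (eps : R) :
  is_distr nu -> (forall b, 0 < nu b) -> 0 <= eps ->
  inf [set ip nu (fun b => `|r b - rt b - xi|) | xi in [set: R]] <= eps ->
  ip x (fun b => r b - rt b) = 0 ->
  ip (fun _ => 1) x != 0 ->
  ip nu (fun b => `|r b - rt b|)
    <= (1 + supnorm (fun b => x b / nu b) * (1 / `|ip x (fun _ => 1)|)) * eps.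
Proof.
move=> nu_distr nu_gt0 _ inf_le xd0; rewrite ipC => x1_neq0.
set C := 1 + _.
have C_gt0 : 0 < C by rewrite ltr_pwDl // mulr_ge0 ?supnorm_ge0 ?divr_ge0.
apply: le_trans (ler_wpM2l (ltW C_gt0) inf_le); apply: ler_mul_inf => // xi.
by rewrite /C; apply: ip_norm_le_orthogonal_shift.
Qed.
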